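(* Let $\mathbf{F}$ be a finite field with $q$ elements, $0\le r\le n$, and $V_j=\operatorname{span}(b_1,\dots,b_j)\subseteq\mathbf{F}^n$ for the standard basis. Let $T_r\colon V_r\to V_n$ be a semi-idempotent partial linear map with domain $V_r$. For $0\le\ell\le n-r$ and $0\le j\le r$ define \[ h_\ell(j,T_r)=q^{\ell j}\sum_{\substack{S\colon V_{n-\ell}\to V_{n-\ell}\ \text{semi-idempotent}\\ \operatorname{rank}S\le j,\ S|_{V_r}=T_r}}\mu(\mathrm{srk}\,S)\binom{n-\ell-\operatorname{rank}S}{j-\operatorname{rank}S}_q . \] Then $h_\ell(j,T_r)$ does not depend on $\ell$.
   Context: A partial linear map on $V$ is a linear map from a subspace of $V$ to $V$; composition $T\circ S$ has domain $S^{-1}(\operatorname{dom}T)$. A partial linear map $T$ is semi-idempotent if for some $N$ it acts as the identity on $\operatorname{im}T^N$; for an operator $S\colon V\to V$ this means $V=X\oplus Y$ with $X,Y$ $S$-stable, $S|_X=\mathrm{id}$, $S|_Y$ nilpotent. The condition $S|_{V_r}=T_r$ means $S(v)=T_r(v)$ for $v\in V_r$ (so it forces $\operatorname{im}T_r\subseteq V_{n-\ell}$). $\mathrm{srk}\,S$ is the rank of $S^i$ for $i\gg0$. $\mu(i)=(-1)^iq^{\binom i2}$; $\binom ab_q$ is the $q$-binomial coefficient. *)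

From HB Require Import structures.
From mathcomp Require Import all_boot all_order all_algebra all_field.
From mathcomp Require Import boolp.
Set Implicit Arguments. Unset Strict Implicit. Unset Printing Implicit Defensive.
Import GRing.Theory.
Local Open Scope ring_scope.

(* Partial maps on a type: v |-> Some (f v) if v in the domain, None otherwise. *)
Fixpoint ppow (X : Type) (f : X -> option X) (N : nat) (v : X) : option X :=
  match N with
  | 0 => Some v
  | N'.+1 => obind f (ppow f N' v)
  end.

Definition semi_idempotent (X : Type) (f : X -> option X) : Prop :=
  exists N : nat, forall v w, ppow f N v = Some w -> f w = Some w.

(* V_r = span(b_1..b_r) = vectors with zero coordinates at indices >= r. *)
Definition inV (F : fieldType) (n r : nat) (v : 'rV[F]_n) : bool :=
  [forall k : 'I_n, (r <= k)%N ==> (v 0 k == 0)].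

(* A linear map T_r : V_r -> V_n is given by the images of b_1..b_r: *)
(* the rows of T : 'M_(r, n).  Its extension by 0 to an n x n matrix: *)
Definition extT (F : fieldType) (r n : nat) (T : 'M[F]_(r, n)) : 'M[F]_n :=
  \matrix_(i < n, j < n) \sum_(k < r | nat_of_ord k == nat_of_ord i) T k j.

Definition Tpart (F : fieldType) (r n : nat) (T : 'M[F]_(r, n))
  (v : 'rV[F]_n) : option 'rV[F]_n :=
  if inV r v then Some (v *m extT T) else None.

(* Inclusion F^m = V_m into F^n (as the first m coordinates). *)
Definition emb (F : fieldType) (m n : nat) (u : 'rV[F]_m) : 'rV[F]_n :=
  \row_(j < n) \sum_(k < m | nat_of_ord k == nat_of_ord j) u 0 k.

(* S : V_m -> V_m (matrix acting on row vectors) satisfies S|_{V_r} = T_r. *)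
Definition restricts_to (F : fieldType) (m r n : nat)
  (S : 'M[F]_m) (T : 'M[F]_(r, n)) : Prop :=
  forall u : 'rV[F]_m, inV r u -> emb n (u *m S) = emb n u *m extT T.

(* stable rank: rank of S^i for i >> 0; for an m x m matrix the ranks *)
(* of powers are stationary from i = m on. *)
Definition srk (F : fieldType) (m : nat) (S : 'M[F]_m) : nat := \rank (S ^+ m).

Definition mu (q i : nat) : int := (-1) ^+ i * (q ^ 'C(i, 2))%N%:Z.

Fixpoint qbin (q a b : nat) {struct a} : nat :=
  match a, b with
  | _, 0 => 1
  | 0, _.+1 => 0
  | a'.+1, b'.+1 => (qbin q a' b' + q ^ b'.+1 * qbin q a' b'.+1)%N
  end.

Definition h (F : finFieldType) (n r : nat) (T : 'M[F]_(r, n)) (l j : nat) : int :=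
  let q := #|F| in
  ((q ^ (l * j))%N%:Z) *
  \sum_(S : 'M[F]_(n - l) |
          `[< semi_idempotent (fun u : 'rV[F]_(n - l) => Some (u *m S)) >]
          && (\rank S <= j)%N
          && `[< restricts_to S T >])
     mu q (srk S) * (qbin q (n - l - \rank S) (j - \rank S))%:Z.

From HB Require Import structures.
From mathcomp Require Import all_boot all_order all_algebra all_field.
From mathcomp Require Import boolp mxabelem ring zify.
Set Implicit Arguments. Unset Strict Implicit. Unset Printing Implicit Defensive.
Import GRing.Theory Num.Theory.
Local Open Scope ring_scope.

(* With f(S) = mu(srk S) for semi-idempotent S and f(S) = 0 otherwise, f is
   invariant under AB <-> BA (hence under conjugation), and it sums to zero
   along every family R + c x with c a fixed nonzero column and x running over
   all rows: after conjugation x is a free first row, and one inducts on the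
   size according as x lies in the row space of the remaining rows or not.
   Splitting S in M_(m+1) by its last row, the rank grows by one exactly when
   that row leaves the row space of the others, so these vanishing sums kill
   every S but the extensions by zero of some S' in M_m.  The q-Pascal rule
   then gives B(m+1) = q^j B(m) for the weighted sum B with h_l = q^(l j) B(n-l). *)

Section StableRank.
Variable F : fieldType.

Lemma exprS_submx n (A : 'M[F]_n) k : (A ^+ k.+1 <= A ^+ k)%MS.
Proof. by rewrite exprS -mulmxE submxMl. Qed.

Lemma eqmx_expr_stable n (A : 'M[F]_n) i k :
  \rank (A ^+ i.+1) = \rank (A ^+ i) -> (i <= k)%N -> (A ^+ k :=: A ^+ i)%MS.
Proof.
move=> stall /subnK <-; have EA : (A ^+ i.+1 :=: A ^+ i)%MS.
  by apply/eqmxP; rewrite -(mxrank_leqif_eq (exprS_submx A i)) stall.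
elim: (k - i)%N => [|d IH]; first by rewrite add0n.
rewrite addSn exprSr -mulmxE; apply: eqmx_trans (eqmxMr A IH) _.
by rewrite mulmxE -exprSr.
Qed.

Lemma expr_rank_stall n (A : 'M[F]_n) :
  exists2 i, (i <= n)%N & \rank (A ^+ i.+1) = \rank (A ^+ i).
Proof.
have [/existsP[i /eqP stall]|] :=
  boolP [exists i : 'I_n.+1, \rank (A ^+ i.+1) == \rank (A ^+ i)].
  by exists i; rewrite // -ltnS.
rewrite negb_exists => /forallP drop.
have rank_decr i : (i <= n.+1)%N -> (\rank (A ^+ i) + i <= n)%N.
  elim: i => [|i IH] le_in; first by rewrite expr0 mxrank1 addn0.
  rewrite addnS (leq_trans _ (IH (ltnW le_in))) // ltn_add2r ltn_neqAle.
  by rewrite (drop (Ordinal le_in)) mxrankS ?exprS_submx.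
by have := rank_decr _ (leqnn n.+1); rewrite addnS ltnNge leq_addl.
Qed.

Lemma mxrank_expr_stable n (A : 'M[F]_n) k :
  (n <= k)%N -> \rank (A ^+ k) = \rank (A ^+ n).
Proof.
move=> le_nk; have [i le_in stall] := expr_rank_stall A.
rewrite (eqmx_expr_stable stall (leq_trans le_in le_nk)).
by rewrite (eqmx_expr_stable stall le_in).
Qed.

Lemma exprS_mulmxC m n (A : 'M[F]_(m, n)) (B : 'M_(n, m)) k :
  (A *m B) ^+ k.+1 = A *m (B *m A) ^+ k *m B.
Proof.
elim: k => [|k IH]; first by rewrite expr1 expr0 mulmx1.
by rewrite exprSr -mulmxE IH [in RHS]exprSr -mulmxE !mulmxA.
Qed.

Lemma srk_mulmxC m n (A : 'M[F]_(m, n)) (B : 'M_(n, m)) :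
  srk (A *m B) = srk (B *m A).
Proof.
suff le_srk m' n' (C : 'M[F]_(m', n')) (D : 'M_(n', m')) :
    (srk (C *m D) <= srk (D *m C))%N.
  by apply/eqP; rewrite eqn_leq !le_srk.
rewrite /srk -(mxrank_expr_stable (C *m D) (leqW (leq_addr n' m'))) exprS_mulmxC.
rewrite -(mxrank_expr_stable (D *m C) (leq_addl m' n')).
exact: leq_trans (mxrankM_maxl _ _) (mxrankM_maxr _ _).
Qed.

End StableRank.

Section SemiIdempotent.
Variable F : fieldType.

Definition semi_idem n (A : 'M[F]_n) : Prop := exists K, A ^+ K.+1 = A ^+ K.

Lemma ppow_mulmx m (S : 'M[F]_m) N (v : 'rV_m) :
  ppow (fun u : 'rV_m => Some (u *m S)) N v = Some (v *m S ^+ N).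
Proof.
elim: N => [|N IH] /=; first by rewrite expr0 mulmx1.
by rewrite IH /= exprSr -mulmxE mulmxA.
Qed.

Lemma semi_idempotent_mulmxP m (S : 'M[F]_m) :
  semi_idempotent (fun u : 'rV_m => Some (u *m S)) <-> semi_idem S.
Proof.
split=> [[N idN]|[K eK]]; [exists N | exists K => v w].
  apply/eqP/mulmxP => u; rewrite exprSr -mulmxE mulmxA.
  by case: (idN u _ (ppow_mulmx S N u)).
by rewrite ppow_mulmx => -[<-]; rewrite -mulmxA mulmxE -exprSr eK.
Qed.

Lemma semi_idem_mulmxC m n (A : 'M[F]_(m, n)) (B : 'M_(n, m)) :
  semi_idem (A *m B) -> semi_idem (B *m A).
Proof. by case=> K eK; exists K.+1; rewrite [LHS]exprS_mulmxC [RHS]exprS_mulmxC eK. Qed.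

Lemma semi_idem_unit n (A : 'M[F]_n) : A \in unitmx -> semi_idem A -> A = 1%:M.
Proof.
move=> Au [K]; elim: K => [|K IH eK]; first by rewrite expr1 expr0.
by apply: IH; apply: (can_inj (mulmxK Au)); rewrite mulmxE -!exprSr.
Qed.

Definition semi_mu (q : nat) n (A : 'M[F]_n) : int :=
  if `[< semi_idem A >] then mu q (srk A) else 0.

Lemma semi_mu_mulmxC q m n (A : 'M[F]_(m, n)) (B : 'M_(n, m)) :
  semi_mu q (A *m B) = semi_mu q (B *m A).
Proof.
rewrite /semi_mu srk_mulmxC; congr (if _ then _ else _).
by apply/asboolP/asboolP; apply: semi_idem_mulmxC.
Qed.

Lemma semi_mu_conj q n (g A : 'M[F]_n) :
  g \in unitmx -> semi_mu q (g *m A *m invmx g) = semi_mu q A.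
Proof. by move=> gu; rewrite -mulmxA semi_mu_mulmxC mulmxKV. Qed.

Lemma semi_mu_unit q n (A : 'M[F]_n) :
  A \in unitmx -> semi_mu q A = if A == 1%:M then mu q n else 0.
Proof.
move=> Au; rewrite /semi_mu; have [->|neA1] := eqVneq A 1%:M.
  have semi1 : semi_idem (1%:M : 'M[F]_n) by exists 0%N; rewrite !expr1n.
  by rewrite asboolT // /srk expr1n mxrank1.
by rewrite asboolF // => /(semi_idem_unit Au) eA1; rewrite eA1 eqxx in neA1.
Qed.

End SemiIdempotent.

Section RankOne.
Variable F : fieldType.

Lemma mxrank_col_mx_rV m n (Q : 'M[F]_(m, n)) (x : 'rV_n) :
  \rank (col_mx Q x) = (\rank Q + ~~ (x <= Q)%MS)%N.
Proof.
rewrite -addsmxE; have [xQ|xNQ] := boolP (x <= Q)%MS.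
  by rewrite addn0; move/addsmx_idPl: xQ => ->.
have ltQ : (Q < Q + x)%MS by rewrite ltmxE addsmxSl addsmx_sub submx_refl.
apply/eqP; rewrite eqn_leq addn1 rank_ltmx // andbT -[(\rank Q).+1]addn1.
by rewrite (leq_trans (mxrank_adds_leqif Q x)) // leq_add2l rank_leq_row.
Qed.

Lemma exists_unitmx_col_e0 n (c : 'cV[F]_n.+1) : c != 0 ->
  exists2 g, g \in unitmx & g *m c = col_mx (1%:M : 'M_1) 0.
Proof.
move=> c_neq0; have rank_c : \rank c = 1%N.
  by apply/eqP; rewrite eqn_leq rank_leq_col lt0n mxrank_eq0.
pose a := row_ebase c 0 0; have a_unit : a \is a GRing.unit.
  by rewrite /a -det_mx11 -unitmxE row_ebase_unit.
exists (a^-1 *: invmx (col_ebase c)).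
  by rewrite unitmxZ ?unitrV //; exact: col_ebase_unit.
rewrite -[X in _ *m X](mulmx_ebase c) rank_c (@pid_mx_col F n 1).
rewrite [row_ebase c]mx11_scalar mul_mx_scalar -/a -scalemxAl scalemxAr scalerA.
by rewrite mulVr // scale1r mulmxA mulVmx ?col_ebase_unit // mul1mx.
Qed.

End RankOne.

Section Counting.
Variable F : finFieldType.
Local Notation q := #|F|.

Lemma card_mulmx_fibre a b (M : 'M[F]_(a, b)) (z : 'rV_b) : (z <= M)%MS ->
  #|[pred y : 'rV_a | y *m M == z]| = (q ^ (a - \rank M))%N.
Proof.
case/submxP=> y0 ->; rewrite -mxrank_ker -card_rowg.
rewrite -(card_imset (rowg (kermx M)) (addIr y0)); apply: eq_card => y.
rewrite inE /=; apply/eqP/imsetP => [eyM|[k kK ->]].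
  by exists (y - y0); rewrite ?subrK // mem_rowg sub_kermx mulmxBl eyM subrr.
by move: kK; rewrite mem_rowg sub_kermx mulmxDl => /eqP ->; rewrite add0r.
Qed.

Lemma sum_mulmx_fibre (V : nmodType) a b (M : 'M[F]_(a, b)) (G : 'rV_b -> V) :
  \sum_(y : 'rV_a) G (y *m M) = (\sum_(z | (z <= M)%MS) G z) *+ q ^ (a - \rank M).
Proof.
rewrite (partition_big (fun y => y *m M) (fun z => (z <= M)%MS)) /=; last first.
  by move=> y _; apply: submxMl.
rewrite -sumrMnl; apply: eq_bigr => z zM.
rewrite (eq_bigr (fun=> G z)) => [|y /eqP <- //].
by rewrite sumr_const card_mulmx_fibre.
Qed.

End Counting.

Section BlockSums.
Variables (R : finType) (V : nmodType).

Lemma sum_row_mx m a b (G : 'M[R]_(m, a + b) -> V) :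
  \sum_x G x = \sum_(x1 : 'M_(m, a)) \sum_(x2 : 'M_(m, b)) G (row_mx x1 x2).
Proof.
rewrite pair_big /= (reindex (fun p : 'M_(m, a) * 'M_(m, b) => row_mx p.1 p.2)) //=.
exists (fun x => (lsubmx x, rsubmx x)) => [[x1 x2] _|x _] /=.
  by rewrite row_mxKl row_mxKr.
by rewrite hsubmxK.
Qed.

Lemma sum_col_mx a b n (G : 'M[R]_(a + b, n) -> V) :
  \sum_x G x = \sum_(x1 : 'M_(a, n)) \sum_(x2 : 'M_(b, n)) G (col_mx x1 x2).
Proof.
rewrite pair_big /= (reindex (fun p : 'M_(a, n) * 'M_(b, n) => col_mx p.1 p.2)) //=.
exists (fun x => (usubmx x, dsubmx x)) => [[x1 x2] _|x _] /=.
  by rewrite col_mxKu col_mxKd.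
by rewrite vsubmxK.
Qed.

End BlockSums.

Lemma mu_succ q k : mu q k.+1 = - (mu q k *+ q ^ k).
Proof. by rewrite /mu exprS binS bin1 expnD PoszM -mulr_natr natz; ring. Qed.

Section Vanishing.
Variable F : finFieldType.
Local Notation q := #|F|.
Local Notation smu := (@semi_mu F q).

Lemma sum_semi_mu_add_rank1_rec n (R0 : 'M[F]_n) (c : 'cV_n) :
  (forall k, (k < n)%N -> forall Q : 'M[F]_(k, 1 + k),
     \sum_(x : 'rV_(1 + k)) smu (col_mx x Q) = 0) ->
  c != 0 -> \sum_(x : 'rV_n) smu (R0 + c *m x) = 0.
Proof.
case: n R0 c => [|k] R0 c vanish c_neq0; first by rewrite flatmx0 eqxx in c_neq0.
have [g g_unit gc] := exists_unitmx_col_e0 c_neq0.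
pose M : 'M_(1 + k) := g *m R0 *m invmx g.
transitivity
  (\sum_(x : 'rV_(1 + k)) smu (M + col_mx (1%:M : 'M_1) 0 *m (x *m invmx g))).
  apply: eq_bigr => x _; rewrite -(semi_mu_conj _ (R0 + c *m x) g_unit).
  by rewrite mulmxDr mulmxDl /M -gc !mulmxA.
rewrite (reindex_inj (can_inj (mulmxK g_unit))) /=.
under eq_bigr do
  rewrite mulmxK // -[M]vsubmxK mul_col_mx mul1mx mul0mx add_col_mx addr0.
rewrite -[RHS](vanish k (ltnSn k) (dsubmx M)); symmetry.
exact: (reindex_inj (addrI (usubmx M))).
Qed.

Lemma sum_semi_mu_free_row_deficient k (Q : 'M[F]_(k, 1 + k)) :
  (forall r, (r < k)%N -> forall Q' : 'M[F]_(r, 1 + r),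
     \sum_(x : 'rV_(1 + r)) smu (col_mx x Q') = 0) ->
  (\rank Q < k)%N -> \sum_(x : 'rV_(1 + k)) smu (col_mx x Q) = 0.
Proof.
move=> vanish lt_rk; pose Qb := row_base Q; pose Y := Q *m pinvmx Qb.
have YQb : Y *m Qb = Q by rewrite mulmxKpV // eq_row_base.
have Y_full : row_full Y.
  by rewrite /row_full eqn_leq rank_leq_col -{1}YQb mxrankM_maxl.
(* [col_mx x Q = L *m col_mx x Qb]; moving [L] to the right leaves a free row
   over the smaller matrix [Qb *m L]. *)
pose L : 'M_(1 + k, 1 + \rank Q) := block_mx 1%:M 0 0 Y.
have factor x : smu (col_mx x Q) = smu (col_mx (x *m L) (Qb *m L)).
  rewrite -mul_col_mx -semi_mu_mulmxC mul_block_col.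
  by rewrite !mul1mx !mul0mx addr0 add0r YQb.
rewrite (eq_bigr _ (fun x _ => factor x)) sum_row_mx.
transitivity (\sum_(x1 : 'rV_1) (\sum_(z : 'rV_(\rank Q))
                 smu (col_mx (row_mx x1 z) (Qb *m L))) *+ q ^ (k - \rank Y)).
  apply: eq_bigr => x1 _; rewrite (eq_bigl (fun z => (z <= Y)%MS)) => [|z].
    rewrite -sum_mulmx_fibre; apply: eq_bigr => x2 _.
    by rewrite mul_row_block !mulmx1 !mulmx0 addr0 add0r.
  by rewrite submx_full.
rewrite sumrMnl -(sum_row_mx (fun w => smu (col_mx w (Qb *m L)))).
by rewrite vanish ?mul0rn.
Qed.

Lemma sum_semi_mu_free_row_outside k (Q : 'M[F]_(k, 1 + k)) : \rank Q = k ->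
  \sum_(x | ~~ (x <= Q)%MS) smu (col_mx x Q) =
  if Q == row_mx 0 1%:M then mu q (1 + k) else 0.
Proof.
move=> rankQ; pose e1 : 'rV[F]_(1 + k) := row_mx 1%:M 0.
have unit_col x : ~~ (x <= Q)%MS -> col_mx x Q \in unitmx.
  move=> xNQ; rewrite -row_free_unit /row_free -addsmxE addsmxC addsmxE.
  by rewrite mxrank_col_mx_rV rankQ xNQ addn1.
have col_mx_eq1 x : (col_mx x Q == 1%:M) = (x == e1) && (Q == row_mx 0 1%:M).
  rewrite [1%:M]scalar_mx_block block_mxEv.
  by apply/eqP/andP => [/eq_col_mx [-> ->]|[/eqP-> /eqP->]].
under eq_bigr => x xNQ do rewrite semi_mu_unit ?unit_col // col_mx_eq1.
have [QE|_] := eqVneq Q (row_mx 0 1%:M); last by rewrite big1 // => x; rewrite andbF.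
have e1NQ : ~~ (e1 <= Q)%MS.
  apply/negP; rewrite QE => /submxP [D /(congr1 lsubmx)].
  rewrite mul_mx_row mulmx0 mulmx1 !row_mxKl => /matrixP /(_ 0 0).
  by rewrite !mxE /= => /eqP; rewrite oner_eq0.
by rewrite (bigD1 e1) //= eqxx big1 ?addr0 // => x /andP [_ /negbTE ->].
Qed.

Lemma sum_semi_mu_free_row_inside k (Q : 'M[F]_(k, 1 + k)) :
  (forall (R0 : 'M[F]_k) (c : 'cV_k), c != 0 -> \sum_x smu (R0 + c *m x) = 0) ->
  \rank Q = k -> \sum_(x | (x <= Q)%MS) smu (col_mx x Q) =
  if Q == row_mx 0 1%:M then mu q k *+ q ^ k else 0.
Proof.
move=> vanish rankQ; have := sum_mulmx_fibre Q (fun x => smu (col_mx x Q)).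
rewrite rankQ subnn expn0 mulr1n => <-.
have shift y : smu (col_mx (y *m Q) Q) = smu (rsubmx Q + lsubmx Q *m y).
  rewrite -[X in col_mx _ X]mul1mx -mul_col_mx semi_mu_mulmxC.
  by rewrite -[X in X *m _]hsubmxK mul_row_col mulmx1 addrC.
rewrite (eq_bigr _ (fun y _ => shift y)).
have [psi0|psi_neq0] := eqVneq (lsubmx Q) 0; last first.
  rewrite vanish //; case: eqP => // QE.
  by rewrite QE row_mxKl eqxx in psi_neq0.
have Q0_unit : rsubmx Q \in unitmx.
  by rewrite -row_free_unit /row_free -(rank_row_0mx 1) -psi0 hsubmxK rankQ.
have -> : (Q == row_mx 0 1%:M) = (rsubmx Q == 1%:M).
  by rewrite -{1}[Q]hsubmxK psi0; apply/eqP/eqP => [/eq_row_mx []|->].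
under eq_bigr do rewrite psi0 mul0mx addr0.
rewrite sumr_const card_mx mul1n semi_mu_unit //.
by case: eqP => _; rewrite ?mul0rn.
Qed.

Lemma sum_semi_mu_free_row_full k (Q : 'M[F]_(k, 1 + k)) :
  (forall (R0 : 'M[F]_k) (c : 'cV_k), c != 0 -> \sum_x smu (R0 + c *m x) = 0) ->
  \rank Q = k -> \sum_(x : 'rV_(1 + k)) smu (col_mx x Q) = 0.
Proof.
move=> vanish rankQ; rewrite (bigID (fun x => (x <= Q)%MS)) /=.
rewrite sum_semi_mu_free_row_inside // sum_semi_mu_free_row_outside //.
by case: eqP => _; rewrite ?addr0 // mu_succ addrN.
Qed.

Lemma sum_semi_mu_free_row k (Q : 'M[F]_(k, 1 + k)) :
  \sum_(x : 'rV_(1 + k)) smu (col_mx x Q) = 0.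
Proof.
elim/ltn_ind: k Q => k IH Q; have [lt_rk|ge_rk] := ltnP (\rank Q) k.
  exact: sum_semi_mu_free_row_deficient.
apply: sum_semi_mu_free_row_full; last by apply/eqP; rewrite eqn_leq rank_leq_row.
by move=> R0 c; apply: sum_semi_mu_add_rank1_rec.
Qed.

Lemma sum_semi_mu_add_rank1 n (R0 : 'M[F]_n) (c : 'cV_n) :
  c != 0 -> \sum_(x : 'rV_n) smu (R0 + c *m x) = 0.
Proof. by apply: sum_semi_mu_add_rank1_rec => k _; apply: sum_semi_mu_free_row. Qed.

Lemma sum_semi_mu_last_row m (Q : 'M[F]_(m, m + 1)) (w : nat -> int) :
  \sum_(x : 'rV_(m + 1)) smu (col_mx Q x) * w (\rank (col_mx Q x)) =
  (\sum_(x | (x <= Q)%MS) smu (col_mx Q x)) * (w (\rank Q) - w (\rank Q).+1).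
Proof.
have total : \sum_(x : 'rV_(m + 1)) smu (col_mx Q x) = 0.
  have e_neq0 : col_mx 0 (1%:M : 'M_1) != 0 :> 'cV[F]_(m + 1).
    by rewrite col_mx_eq0 negb_and oner_neq0 orbT.
  rewrite -[RHS](sum_semi_mu_add_rank1 (col_mx Q 0) e_neq0); apply: eq_bigr => x _.
  by rewrite mul_col_mx mul0mx mul1mx add_col_mx add0r addr0.
have rank_col (x : 'rV_(m + 1)) :
    \rank (col_mx Q x) = if (x <= Q)%MS then \rank Q else (\rank Q).+1.
  by rewrite mxrank_col_mx_rV; case: (x <= Q)%MS; rewrite ?addn0 // [(_ + _)%N]addnC.
rewrite (bigID (fun x => (x <= Q)%MS)) /= in total.
rewrite [LHS](bigID (fun x => (x <= Q)%MS)) /=.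
under eq_bigr => x xQ do rewrite rank_col xQ.
under [X in _ + X]eq_bigr => x xNQ do rewrite rank_col (negbTE xNQ).
by rewrite -!mulr_suml; move/eqP: total; rewrite addr_eq0 => /eqP ->; ring.
Qed.

Lemma sum_semi_mu_last_row_in_rowspace m (Q : 'M[F]_(m, m + 1)) :
  \sum_(x | (x <= Q)%MS) smu (col_mx Q x) =
  if rsubmx Q == 0 then smu (lsubmx Q) *+ q ^ \rank Q else 0.
Proof.
have q_gt0 : (0 < q)%N by apply/card_gt0P; exists 0.
have shift y : smu (col_mx Q (y *m Q)) = smu (lsubmx Q + rsubmx Q *m y).
  rewrite -[X in col_mx X _]mul1mx -mul_col_mx semi_mu_mulmxC.
  by rewrite -[X in X *m _]hsubmxK mul_row_col mulmx1.
apply: (@pmulrnI _ (q ^ (m - \rank Q))); first by rewrite expn_gt0 q_gt0.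
rewrite /= -(sum_mulmx_fibre Q (fun x => smu (col_mx Q x))).
rewrite (eq_bigr _ (fun y _ => shift y)).
have [Qr0|Qr_neq0] := eqVneq (rsubmx Q) 0; last first.
  by rewrite sum_semi_mu_add_rank1 // mul0rn.
under eq_bigr do rewrite Qr0 mul0mx addr0.
by rewrite sumr_const card_mx mul1n -mulrnA -expnD subnKC // rank_leq_row.
Qed.

End Vanishing.

Section Restriction.
Variables (F : fieldType) (r n : nat) (T : 'M[F]_(r, n)).

Lemma inV_row_mx0 m (u : 'rV[F]_m) : inV r (row_mx u (0 : 'rV_1)) = inV r u.
Proof.
apply/forallP/forallP => uV k.
  by have := uV (lshift 1 k); rewrite row_mxEl.
rewrite -(splitK k); case: (split k) => [k'|k'] /=.
  by rewrite row_mxEl; apply: uV.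
by rewrite row_mxEr mxE eqxx implybT.
Qed.

Lemma inV_lsubmxK m (u : 'rV[F]_(m + 1)) :
  (r <= m)%N -> inV r u -> u = row_mx (lsubmx u) 0.
Proof.
move=> le_rm /forallP uV; rewrite -{1}(hsubmxK u); congr row_mx.
apply/rowP => k; rewrite !mxE.
by have /implyP/(_ (leq_trans le_rm (leq_addr _ _)))/eqP := uV (rshift m k).
Qed.

Lemma emb_row_mx0 m (v : 'rV[F]_m) : emb n (row_mx v (0 : 'rV_1)) = emb n v.
Proof.
apply/rowP => j; rewrite !mxE big_split_ord /=.
rewrite [X in _ + X]big1 ?addr0 => [|i _]; last by rewrite row_mxEr mxE.
by apply: eq_bigr => i _; rewrite row_mxEl.
Qed.

Lemma mulmx_col_mx_inV m (Q : 'M[F]_(m, m + 1)) x (u : 'rV_(m + 1)) :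
  (r <= m)%N -> inV r u -> u *m col_mx Q x = lsubmx u *m Q.
Proof.
by move=> le_rm /(inV_lsubmxK le_rm) {1}->; rewrite mul_row_col mul0mx addr0.
Qed.

Lemma restricts_to_col_mx m (Q : 'M[F]_(m, m + 1)) x :
  (r <= m)%N -> restricts_to (col_mx Q x) T <-> restricts_to (col_mx Q 0) T.
Proof.
by move=> le_rm; split=> restr u uV; rewrite -(restr u uV) !mulmx_col_mx_inV.
Qed.

Lemma restricts_to_block0 m (S : 'M[F]_m) : (r <= m)%N ->
  restricts_to (col_mx (row_mx S 0) 0 : 'M_(m + 1)) T <-> restricts_to S T.
Proof.
move=> le_rm; split=> restr u uV.
  have := restr (row_mx u 0); rewrite inV_row_mx0 mul_row_col mul0mx addr0.
  by move=> /(_ uV); rewrite mul_mx_row mulmx0 !emb_row_mx0.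
have uV' : inV r (lsubmx u) by rewrite -inV_row_mx0 -(inV_lsubmxK le_rm uV).
rewrite mulmx_col_mx_inV // mul_mx_row mulmx0 emb_row_mx0.
by rewrite [in RHS](inV_lsubmxK le_rm uV) emb_row_mx0 restr.
Qed.

End Restriction.

Definition qbin_weight (q m j k : nat) : int :=
  if (k <= j)%N then (qbin q (m - k) (j - k))%:Z else 0.

Lemma qbin_weightS q m j k : (k <= m)%N ->
  (qbin_weight q (m + 1) j k - qbin_weight q (m + 1) j k.+1) *+ q ^ k =
  qbin_weight q m j k *+ q ^ j.
Proof.
move=> le_km; rewrite /qbin_weight addn1 subSS (subSn le_km).
case: (ltngtP k j) => [lt_kj|lt_jk|<-]; last by rewrite subnn subr0; case: (m - k)%N.
  rewrite -[in LHS](subnSK lt_kj) /= PoszD addrAC subrr add0r.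
  rewrite -[X in X *+ q ^ k]natz -[X in X *+ q ^ j]natz -!mulrnA; congr (_ *+ _).
  by rewrite mulnAC -expnD subnSK // subnK ?(ltnW lt_kj) // mulnC.
by rewrite subrr !mul0rn.
Qed.

Section RestrictedSum.
Variables (F : finFieldType) (n r : nat) (T : 'M[F]_(r, n)) (j : nat).
Local Notation q := #|F|.
Local Notation smu := (@semi_mu F q).

Definition restricted_sum m : int :=
  \sum_(S : 'M[F]_m | `[< restricts_to S T >]) smu S * qbin_weight q m j (\rank S).

Lemma h_restricted_sum l : h T l j = restricted_sum (n - l) *+ q ^ (l * j).
Proof.
rewrite /h mulrC -natz mulr_natr /restricted_sum big_mkcond [in RHS]big_mkcond.
congr (_ *+ _).
apply: eq_bigr => S _; rewrite (asbool_equiv_eq (semi_idempotent_mulmxP S)).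
rewrite /semi_mu /qbin_weight.
by case: `[< semi_idem S >]; case: (\rank S <= j)%N; case: `[< restricts_to S T >];
  rewrite /= ?mulr0 ?mul0r.
Qed.

Lemma restricted_sumS m :
  (r <= m)%N -> restricted_sum (m + 1) = restricted_sum m *+ q ^ j.
Proof.
move=> le_rm; pose w := qbin_weight q (m + 1) j.
have last_row (Q : 'M[F]_(m, m + 1)) :
    \sum_(x : 'rV_(m + 1)) (if `[< restricts_to (col_mx Q x) T >]
                            then smu (col_mx Q x) * w (\rank (col_mx Q x)) else 0) =
    if `[< restricts_to (col_mx Q 0) T >] && (rsubmx Q == 0)
    then smu (lsubmx Q) *+ q ^ \rank Q * (w (\rank Q) - w (\rank Q).+1) else 0.
  under eq_bigr do rewrite (asbool_equiv_eq (restricts_to_col_mx T _ _ le_rm)).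
  case: (boolP `[< restricts_to (col_mx Q 0) T >]) => _ /=; last by rewrite big1.
  rewrite sum_semi_mu_last_row sum_semi_mu_last_row_in_rowspace.
  by case: (rsubmx Q == 0); rewrite ?mul0r.
(* Only [Q] with zero last column survive, i.e. the extensions by zero of some
   [S : 'M_m]. *)
rewrite /restricted_sum big_mkcond [in RHS]big_mkcond sum_col_mx -/w.
rewrite (eq_bigr _ (fun Q _ => last_row Q)).
rewrite sum_row_mx -sumrMnl; apply: eq_bigr => S _.
rewrite (bigD1 0) //= big1 ?addr0 => [|c /negbTE c_neq0]; last first.
  by rewrite row_mxKr c_neq0 andbF.
rewrite row_mxKr eqxx andbT row_mxKl rank_row_mx0.
rewrite (asbool_equiv_eq (restricts_to_block0 T S le_rm)).
case: ifP => _; last by rewrite mul0rn.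
by rewrite mulrnAl -mulrnAr /w qbin_weightS ?rank_leq_row // mulrnAr.
Qed.

Lemma h_succ l : (l.+1 <= n - r)%N -> h T l j = h T l.+1 j.
Proof.
move=> lt_l; rewrite !h_restricted_sum.
have -> : (n - l = (n - l.+1) + 1)%N by lia.
rewrite restricted_sumS; last by lia.
by rewrite -mulrnA -expnD mulSn.
Qed.

Lemma h_const l : (l <= n - r)%N -> h T l j = h T (n - r) j.
Proof.
move=> /subnK; move: (n - r - l)%N => d.
elim: d l => [|d IH] l e; first by rewrite -e add0n.
have lt_l : (l.+1 <= n - r)%N by rewrite -e addSnnS leq_addl.
by rewrite h_succ // IH // -e addSnnS.
Qed.

End RestrictedSum.

Theorem proposition3p6 (F : finFieldType) (n r : nat) (T : 'M[F]_(r, n)) :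
  (r <= n)%N ->
  semi_idempotent (Tpart T) ->
  forall j l1 l2 : nat, (j <= r)%N -> (l1 <= n - r)%N -> (l2 <= n - r)%N ->
  h T l1 j = h T l2 j.
Proof.
move=> _ _ j l1 l2 _ le_l1 le_l2.
by rewrite (h_const _ _ le_l1) (h_const _ _ le_l2).
Qed.
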